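(* Let $r\ge 2$ and let $H$ be an $r$-graph with at least $g(r,4)$ edges. Then there is a constant $b=b(H)>0$ such that $C_r(n,H)=\Omega(n^b)$ as $n\to\infty$.
   Context: An $r$-graph is an $r$-uniform hypergraph; $K_n^{(r)}$ is the complete $r$-graph on $n$ vertices. A copy of an $r$-graph $H$ in $K_n^{(r)}$ is a subhypergraph isomorphic to $H$. An $(n,r,H)$-local coloring with $k$ colors is a family of edge-colorings $f_v:E(K_n^{(r)})\to[k]$, one per vertex $v$, such that for every copy $T$ of $H$ there is $u\in V(T)$ with $f_u$ injective on $E(T)$. $C_r(n,H)$ is the minimum such $k$. A sunflower $S_r(d,m)$ is an $r$-graph with $m$ edges that pairwise intersect in the same $d$-vertex set. $g(r,m)$ denotes the minimum integer $N$ such that every $r$-graph with at least $N$ edges contains a sunflower $S_r(d,m)$ for some $0\le d\le r-1$ (by Erdős–Rado, $(m-1)^r\le g(r,m)\le (m-1)^r r!+1$). *)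

From mathcomp Require Import all_boot.
From mathcomp Require Import boolp.
Set Implicit Arguments. Unset Strict Implicit. Unset Printing Implicit Defensive.

(* Minimum of a (Prop-valued) set of naturals; 0 if the set is empty
   (the default never matters below). *)
Definition min_nat (P : nat -> Prop) : nat :=
  match pselect (exists n, P n) with
  | left h =>
      @ex_minn (fun n => `[< P n >])
        (let: ex_intro n Pn := h in ex_intro _ n (introT (asboolP (P n)) Pn))
  | right _ => 0
  end.

Definition r_graph (r : nat) (V : finType) (E : {set {set V}}) : Prop :=
  forall e, e \in E -> #|e| = r.

Definition has_sunflower (r d m : nat) (V : finType) (E : {set {set V}}) : Prop :=
  exists (S : {set {set V}}) (D : {set V}),
    [/\ S \subset E, #|S| = m, #|D| = d &
        forall e1 e2, e1 \in S -> e2 \in S -> e1 != e2 -> e1 :&: e2 = D].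

Definition has_some_sunflower (r m : nat) (V : finType) (E : {set {set V}}) : Prop :=
  exists d, d <= r - 1 /\ has_sunflower r d m E.

Definition g (r m : nat) : nat :=
  min_nat (fun N => forall (V : finType) (E : {set {set V}}),
             r_graph r E -> N <= #|E| -> has_some_sunflower r m E).

(* A copy of H (vertex type VH, edges EH) in K_n^(r) is given by an injective
   vertex map phi : VH -> 'I_n; its vertex set is phi @: VH and its edge set
   is the image of EH. *)
Definition copy_vertices (VH : finType) (n : nat) (phi : VH -> 'I_n) : {set 'I_n} :=
  phi @: [set: VH].
Definition copy_edges (VH : finType) (EH : {set {set VH}}) (n : nat)
  (phi : VH -> 'I_n) : {set {set 'I_n}} :=
  (fun e : {set VH} => phi @: e) @: EH.

(* An (n,r,H)-local coloring with k colors: one edge-coloring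
   f v : E(K_n^(r)) -> [k] per vertex v (given on all subsets, only r-subsets
   matter) such that every copy T of H has a vertex u with f u injective on E(T). *)
Definition local_coloring (r n k : nat) (VH : finType) (EH : {set {set VH}})
  (f : 'I_n -> {set 'I_n} -> 'I_k) : Prop :=
  forall phi : VH -> 'I_n, injective phi ->
    exists2 u, u \in copy_vertices phi &
      {in copy_edges EH phi &, injective (f u)}.

Definition C_loc (r n : nat) (VH : finType) (EH : {set {set VH}}) : nat :=
  min_nat (fun k => exists f : 'I_n -> {set 'I_n} -> 'I_k, local_coloring r EH f).

(* Since H has at least g(r,4) edges it contains a sunflower e_0, ..., e_3
   with kernel D and petals of size p.  Inside K_n keep one copy of V(H) and
   add t ~ n / |V(H)| disjoint slots of p fresh vertices; the slot edge of slot
   j is D together with slot j.  Any injective choice of four slots for the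
   four petals yields a copy of H whose sunflower edges are slot edges.  Given
   a local colouring with k colours, every vertex colours the t slot edges.  A
   pigeonhole argument finds, once t > k^|V(H)| (k^p + 1)^4, four slots such
   that every vertex of the corresponding copy gives two of its sunflower edges
   the same colour, so no vertex of that copy is injective on its edges.  Hence
   n = O(|V(H)| k^(5|V(H)|)). *)

From mathcomp Require Import all_boot zify boolp.
Set Implicit Arguments. Unset Strict Implicit. Unset Printing Implicit Defensive.

Lemma pigeonhole (T U : finType) (A : {set T}) (B : {set U}) (R : T -> U -> bool) m :
  {in A, forall x, exists2 y, y \in B & R x y} -> #|B| * m < #|A| ->
  exists2 y, y \in B & m < #|[set x in A | R x y]|.
Proof.
move=> AB big; apply/exists_inP; apply: contraTT big => /exists_inPn small.
rewrite -leqNgt -sum_nat_const -sum1_card.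
have fiberE y : #|[set x in A | R x y]| = \sum_(x in A) R x y.
  rewrite -sum1_card big_mkcond [RHS]big_mkcond; apply: eq_bigr => x _.
  by rewrite inE; case: (x \in A); case: (R x y).
apply: (@leq_trans (\sum_(y in B) \sum_(x in A) R x y)).
  rewrite exchange_big /= leq_sum // => x /AB[y yB Rxy].
  by rewrite (bigD1 y) //= Rxy.
by rewrite leq_sum // => y yB; rewrite -fiberE leqNgt small.
Qed.

Lemma exists_collision (T U : finType) (A : {set T}) (f : T -> U) :
  #|U| < #|A| -> exists a b, [/\ a \in A, b \in A, a != b & f a = f b].
Proof.
move=> big; have [z _] : exists2 z, z \in [set: U] & 1 < #|[set x in A | f x == z]|.
  by apply: pigeonhole => [x _|]; [exists (f x) | rewrite cardsT muln1].
case/card_gt1P=> a [b []]; rewrite !inE => /andP[aA /eqP <-] /andP[bA /eqP fb] ab.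
by exists a, b.
Qed.

Lemma exists_subset_card (T : finType) (A : {set T}) m :
  m <= #|A| -> exists2 S : {set T}, S \subset A & #|S| = m.
Proof.
case/card_geqP=> s [s_uniq s_size sA]; exists [set x in s].
  by apply/subsetP=> x; rewrite inE; apply: sA.
by rewrite cardsE (card_uniqP s_uniq).
Qed.

Definition sunflower (V : finType) (S : {set {set V}}) (D : {set V}) : Prop :=
  forall e1 e2, e1 \in S -> e2 \in S -> e1 != e2 -> e1 :&: e2 = D.

Definition contains_sunflower (m : nat) (V : finType) (E : {set {set V}}) : Prop :=
  exists (S : {set {set V}}) (D : {set V}), [/\ S \subset E, #|S| = m & sunflower S D].

Definition link (V : finType) (E : {set {set V}}) (x : V) : {set {set V}} :=
  [set e :\ x | e in E & x \in e].

Lemma card_link (V : finType) (E : {set {set V}}) x :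
  #|link E x| = #|[set e in E | x \in e]|.
Proof.
apply: card_in_imset => e1 e2; rewrite !inE => /andP[_ xe1] /andP[_ xe2] eq12.
by rewrite -(setD1K xe1) -(setD1K xe2) eq12.
Qed.

Lemma r_graph_link r (V : finType) (E : {set {set V}}) x :
  r_graph r.+1 E -> r_graph r (link E x).
Proof.
move=> rE _ /imsetP[e /[!inE] /andP[eE xe] ->].
by have := rE e eE; rewrite (cardsD1 x) xe add1n => -[].
Qed.

Lemma contains_sunflower_link m (V : finType) (E : {set {set V}}) x :
  contains_sunflower m (link E x) -> contains_sunflower m E.
Proof.
move=> [S [D [SL cS sfS]]].
have xS a : a \in S -> x \notin a.
  by move/(subsetP SL)=> /imsetP[e _ ->]; rewrite setD11.
exists (setU [set x] @: S), (x |: D); split.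
- apply/subsetP=> _ /imsetP[a /[dup] aS /(subsetP SL) /imsetP[e] /[!inE] /andP[eE xe] -> ->].
  by rewrite setD1K.
- rewrite -cS; apply: card_in_imset => a b aS bS eq_ab.
  by rewrite -(setU1K (xS a aS)) -(setU1K (xS b bS)) eq_ab.
- move=> _ _ /imsetP[a aS ->] /imsetP[b bS ->] neq.
  by rewrite -setUIr sfS //; apply: contraNneq neq => ->.
Qed.

Lemma maximal_matching (V : finType) (E : {set {set V}}) :
  set0 \notin E -> exists2 M : {set {set V}}, (M \subset E) && trivIset M &
    forall e, e \in E -> ~~ [disjoint e & cover M].
Proof.
move=> E0.
pose matching (M : {set {set V}}) := (M \subset E) && trivIset M.
have matching0 : matching set0 by rewrite /matching sub0set; apply/trivIsetP=> A B; rewrite inE.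
have [M maxM _] := maxset_exists matching0.
have /andP[ME trivM] := maxsetp maxM.
exists M => [|e eE]; first by rewrite ME.
apply/negP=> disj_eM.
have eM : e \notin M.
  apply: contraNN E0 => eM; have := disjointWr (bigcup_sup e eM) disj_eM.
  by move/disjoint_setI0; rewrite setIid => <-.
have [trivM' _] := trivIsetU1 (fun B BM => disjointWr (bigcup_sup B BM) disj_eM) trivM
  (contraNN (subsetP ME set0) E0).
have PM' : matching (e |: M) by rewrite /matching subUset sub1set eE ME.
by move: eM; rewrite -(maxsetsup maxM PM' (subsetUr _ _)) setU11.
Qed.

Lemma erdos_rado_sunflower m r (V : finType) (E : {set {set V}}) :
  r_graph r E -> m.-1 ^ r * r`! < #|E| -> contains_sunflower m E.
Proof.
elim: r E => [|r IHr] E rE big.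
  suff : #|E| <= #|[set set0 : {set V}]| by rewrite cards1 leqNgt big.
  by apply/subset_leq_card/subsetP=> e /rE /eqP; rewrite cards_eq0 inE.
have E0 : set0 \notin E by apply/negP=> /rE; rewrite cards0.
have [M /andP[ME trivM] meetM] := maximal_matching E0.
have [mM|Mm] := leqP m #|M|.
  have [S SM cS] := exists_subset_card mM.
  exists S, set0; split=> [||e1 e2 e1S e2S neq]; [exact: subset_trans SM ME|done|].
  by apply: disjoint_setI0; move/trivIsetP: trivM; apply; rewrite ?(subsetP SM).
have cover_small : #|cover M| <= m.-1 * r.+1.
  rewrite -(eqP trivM) (eq_bigr (fun _ => r.+1)) => [|B BM]; last exact/rE/(subsetP ME).
  by rewrite sum_nat_const leq_mul2r; apply/orP; right; lia.
have [x _ big_x] : exists2 x, x \in cover M & m.-1 ^ r * r`! < #|[set e in E | x \in e]|.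
  apply: pigeonhole => [e /meetM /pred0Pn[x /andP[xe xM]]|]; first by exists x.
  apply: leq_ltn_trans big; rewrite expnS factS mulnACA.
  by rewrite leq_mul2r cover_small orbT.
apply: (@contains_sunflower_link _ _ _ x); apply: IHr; first exact: r_graph_link.
by rewrite card_link.
Qed.

Lemma has_some_sunflower_contains r m (V : finType) (E : {set {set V}}) :
  1 < m -> r_graph r E -> contains_sunflower m E -> has_some_sunflower r m E.
Proof.
move=> m_gt1 rE [S [D [SE cS sfS]]]; exists #|D|; split; last by exists S, D.
have /card_gt1P[e1 [e2 [e1S e2S neq]]] : 1 < #|S| by rewrite cS.
have De1 : D \subset e1 by rewrite -(sfS e1 e2) ?subsetIl.
have De2 : D \subset e2 by rewrite -(sfS e1 e2) ?subsetIr.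
have kernelE e : e \in S -> D \subset e -> r <= #|D| -> D = e.
  by move=> eS De rD; apply/eqP; rewrite eqEcard De rE ?(subsetP SE).
rewrite leqNgt; apply: contraNN neq => rD.
have {}rD : r <= #|D| by move: rD; rewrite subn1; case: (r).
by rewrite -(kernelE e1) // -(kernelE e2).
Qed.

Lemma min_nat_sat (P : nat -> Prop) : (exists n, P n) -> P (min_nat P).
Proof. by rewrite /min_nat => exP; case: pselect => // ?; case: ex_minnP => n /asboolP. Qed.

Lemma has_some_sunflower_g r m (V : finType) (E : {set {set V}}) :
  1 < m -> r_graph r E -> g r m <= #|E| -> has_some_sunflower r m E.
Proof.
move=> m_gt1; apply: (@min_nat_sat (fun N => forall (V : finType) (E : {set {set V}}),
  r_graph r E -> N <= #|E| -> has_some_sunflower r m E)).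
exists (m.-1 ^ r * r`!).+1 => {}V {}E rE bigE.
exact/has_some_sunflower_contains/(erdos_rado_sunflower rE).
Qed.

Lemma local_coloring_C_loc r n (VH : finType) (EH : {set {set VH}}) :
  0 < #|VH| -> exists f : 'I_n -> {set 'I_n} -> 'I_(C_loc r n EH), local_coloring r EH f.
Proof.
case/card_gt0P=> x0 _.
apply: (@min_nat_sat (fun k => exists f : 'I_n -> {set 'I_n} -> 'I_k, local_coloring r EH f)).
exists #|{set 'I_n}|, (fun _ => enum_rank).
move=> phi _; exists (phi x0); first exact: imset_f.
by move=> A B _ _ /enum_rank_inj.
Qed.

Lemma local_coloring_rainbow r n k (VH : finType) (EH : {set {set VH}})
    (f : 'I_n -> {set 'I_n} -> 'I_k) (phi : VH -> 'I_n) :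
  local_coloring r EH f -> injective phi ->
  exists x, {in EH &, injective (fun e : {set VH} => f (phi x) (phi @: e))}.
Proof.
move=> loc phi_inj; have [_ /imsetP[x _ ->] f_inj] := loc phi phi_inj.
exists x => e1 e2 e1E e2E /f_inj.
by move=> /(_ (imset_f _ e1E) (imset_f _ e2E)); apply: imset_inj.
Qed.

Lemma colliding_quadruple_in_set (J X : finType) (chi : J -> J -> X) (B : {set J}) :
  #|X|.+1 ^ 4 < #|B| ->
  exists a b c d, [/\ {subset [:: a; b; c; d] <= B}, uniq [:: a; b; c; d],
    chi c a = chi c b /\ chi d a = chi d b & chi a c = chi a d /\ chi b c = chi b d].
Proof.
(* Fix q points A; each c outside A sees two points a, b of A alike, many c
   share the same pair (a, b), and among those a and b see some c, d alike. *)
move=> big; set q := #|X|.+1 in big.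
have qB : q <= #|B| by apply: leq_trans (ltnW big); rewrite -{1}(expn1 q) leq_pexp2l.
have [A AB cA] := exists_subset_card qB.
have pair c : c \in B :\: A ->
    exists2 ab, ab \in setX A A & (ab.1 != ab.2) && (chi c ab.1 == chi c ab.2).
  move=> _; have /(exists_collision (chi c))[a [b [aA bA ab eq_ab]]] : #|X| < #|A| by rewrite cA.
  by exists (a, b); rewrite ?inE ?aA ?bA //= ab eq_ab eqxx.
have [[a b] /[!inE] /= /andP[aA bA] bigF] : exists2 ab, ab \in setX A A &
    #|X| ^ 2 < #|[set c in B :\: A | (ab.1 != ab.2) && (chi c ab.1 == chi c ab.2)]|.
  apply: pigeonhole pair _; rewrite cardsX cA cardsD (setIidPr AB) cA.
  move: big; rewrite -/q; nia.
set F := [set c in _ | _] in bigF.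
have /(exists_collision (fun c => (chi a c, chi b c)))[c [d [cF dF cd [ac bc]]]] :
  #|{: X * X}| < #|F| by rewrite card_prod mulnn.
move: cF dF; rewrite !inE => /andP[/andP[cNA cB] /andP[ab /eqP cab]].
move=> /andP[/andP[dNA dB] /andP[_ /eqP dab]].
have neqA u v : u \in A -> v \notin A -> u != v by move=> uA; apply: contraNneq => <-.
exists a, b, c, d; split=> //.
- by move=> x; rewrite !inE => /or4P[] /eqP-> //; apply: (subsetP AB).
- by rewrite /= !inE !negb_or ab cd !neqA.
Qed.

Lemma exists_colliding_quadruple (J X Y : finType) (chi : J -> J -> X) (psi : J -> Y) :
  #|Y| * #|X|.+1 ^ 4 < #|J| ->
  exists beta : 'I_4 -> J, [/\ injective beta, ~ injective (psi \o beta) &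
    forall i, ~ injective (chi (beta i) \o beta)].
Proof.
move=> big; have [y _ bigB] : exists2 y, y \in [set: Y] &
    #|X|.+1 ^ 4 < #|[set j in [set: J] | psi j == y]|.
  by apply: pigeonhole => [j _|]; [exists (psi j) | rewrite !cardsT].
have [a [b [c [d [inB uniq_abcd [cab dab] [acd bcd]]]]]] := colliding_quadruple_in_set chi bigB.
pose beta := tnth [tuple a; b; c; d].
have collide (T : Type) (F : J -> T) (i j : 'I_4) :
    i != j -> F (beta i) = F (beta j) -> ~ injective (F \o beta).
  by move=> /eqP ij eqF /(_ i j eqF).
pose o0 : 'I_4 := Ordinal (isT : 0 < 4).
pose o1 : 'I_4 := Ordinal (isT : 1 < 4).
pose o2 : 'I_4 := Ordinal (isT : 2 < 4).
pose o3 : 'I_4 := Ordinal (isT : 3 < 4).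
exists beta; split; first exact/tuple_uniqP.
  apply: (collide _ _ o2 o3) => //=.
  have /inB : c \in [:: a; b; c; d] by rewrite !inE eqxx !orbT.
  have /inB : d \in [:: a; b; c; d] by rewrite !inE eqxx !orbT.
  by rewrite !inE => /eqP -> /eqP ->.
by case=> [[|[|[|[|i]]]] // lt]; [apply: (collide _ _ o2 o3) | apply: (collide _ _ o2 o3)
  | apply: (collide _ _ o0 o1) | apply: (collide _ _ o0 o1)].
Qed.

Section Blowup.

Variables (r : nat) (VH : finType) (EH : {set {set VH}}).
Variables (e : 'I_4 -> {set VH}) (D : {set VH}) (p : nat).
Hypothesis e_EH : forall i, e i \in EH.
Hypothesis e_inj : injective e.
Hypothesis e_sunflower : forall i j, i != j -> e i :&: e j = D.
Hypothesis card_petal : forall i, #|e i :\: D| = p.+1.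

Definition petal i := e i :\: D.

Lemma kernel_sub i : D \subset e i.
Proof.
case: (eqVneq i ord0) => [->|i0]; last by rewrite -(e_sunflower i0) subsetIl.
by rewrite -(@e_sunflower ord0 ord_max) ?subsetIl.
Qed.

Lemma petals_disjoint i j x : x \in petal i -> x \in petal j -> i = j.
Proof.
rewrite !inE => /andP[xD xi] /andP[_ xj]; apply/eqP; apply: contraNT xD => ij.
by rewrite -(e_sunflower ij) inE xi xj.
Qed.

Definition petal_of x := [pick i | x \in petal i].

Lemma petal_ofE i x : x \in petal i -> petal_of x = Some i.
Proof.
move=> xi; rewrite /petal_of; case: pickP => [j xj|/(_ i)]; last by rewrite xi.
by rewrite (petals_disjoint xj xi).
Qed.

Definition label i x : 'I_p.+1 := inord (index x (enum (petal i))).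

Lemma label_inj i : {in petal i &, injective (label i)}.
Proof.
have index_lt x : x \in petal i -> index x (enum (petal i)) < p.+1.
  by rewrite /petal => xi; rewrite -(card_petal i) cardE index_mem mem_enum.
move=> x y xi yi /(congr1 val); rewrite /= !inordK ?index_lt //.
by apply: (index_inj x); rewrite mem_enum.
Qed.

Lemma label_onto i : label i @: petal i = setT.
Proof.
apply/eqP; rewrite eqEcard subsetT cardsT card_ord card_in_imset; last exact: label_inj.
by rewrite /petal card_petal leqnn.
Qed.

(* Vertices of the blow-up: a copy of V(H), and t slots of p.+1 positions;
   [label i] identifies petal i with the positions of a slot. *)
Variable t : nat.
Local Notation W := (VH + 'I_t * 'I_p.+1)%type.

Definition blowup_copy (beta : 'I_4 -> 'I_t) x : W :=
  if petal_of x is Some i then inr (beta i, label i x) else inl x.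

Definition slot_edge (j : 'I_t) : {set W} := inl @: D :|: [set inr (j, m) | m in [set: 'I_p.+1]].

Lemma blowup_copy_inj beta : injective beta -> injective (blowup_copy beta).
Proof.
move=> beta_inj x y; rewrite /blowup_copy /petal_of.
case: pickP => [i xi|_]; case: pickP => [j yj|_] //; last by case.
by case=> /beta_inj ij; rewrite -ij in yj *; apply: label_inj.
Qed.

Lemma blowup_copy_edge beta i : blowup_copy beta @: e i = slot_edge (beta i).
Proof.
rewrite -(setID (e i) D) (setIidPr (kernel_sub i)) imsetU; congr (_ :|: _).
  apply: eq_in_imset => x xD; rewrite /blowup_copy /petal_of.
  by case: pickP => // j; rewrite inE xD.
rewrite -(label_onto i) -imset_comp.
by apply: eq_in_imset => x xi; rewrite /blowup_copy (petal_ofE xi).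
Qed.

Variables (n k : nat) (f : 'I_n -> {set 'I_n} -> 'I_k) (iota : W -> 'I_n).
Hypothesis f_local : local_coloring r EH f.
Hypothesis iota_inj : injective iota.

Definition slot_color (w : W) (j : 'I_t) : 'I_k := f (iota w) (iota @: slot_edge j).

Lemma blowup_rainbow beta : injective beta ->
  exists x, injective (slot_color (blowup_copy beta x) \o beta).
Proof.
move=> beta_inj.
have [x x_inj] := local_coloring_rainbow f_local (inj_comp iota_inj (blowup_copy_inj beta_inj)).
exists x => i j eq_ij; apply: e_inj; apply: x_inj; rewrite ?e_EH //.
by rewrite !(imset_comp iota (blowup_copy beta)) !blowup_copy_edge.
Qed.

Lemma slots_bounded : t <= k ^ #|VH| * (k ^ p.+1).+1 ^ 4.
Proof.
rewrite leqNgt; apply/negP=> big.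
pose chi j j' := [ffun m => slot_color (inr (j, m)) j'].
pose psi j := [ffun x => slot_color (inl x) j].
have [|beta [beta_inj psi_coll chi_coll]] := exists_colliding_quadruple chi psi.
  by rewrite !card_ffun !card_ord.
have [x] := blowup_rainbow beta_inj; rewrite /blowup_copy.
case: (petal_of x) => [i|] color_inj.
  apply: (chi_coll i); apply: (@inj_compr _ _ _ (fun F : {ffun _ -> _} => F (label i x))).
  by apply: eq_inj color_inj _ => j /=; rewrite ffunE.
apply: psi_coll; apply: (@inj_compr _ _ _ (fun F : {ffun _ -> _} => F x)).
by apply: eq_inj color_inj _ => j /=; rewrite ffunE.
Qed.

End Blowup.

Lemma sunflower_coloring_bound r (VH : finType) (EH : {set {set VH}})
    (e : 'I_4 -> {set VH}) (D : {set VH}) p n k t (f : 'I_n -> {set 'I_n} -> 'I_k) :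
  (forall i, e i \in EH) -> injective e -> (forall i j, i != j -> e i :&: e j = D) ->
  (forall i, #|e i :\: D| = p.+1) -> local_coloring r EH f ->
  #|VH| + t * p.+1 <= n -> t <= k ^ #|VH| * (k ^ p.+1).+1 ^ 4.
Proof.
move=> e_EH e_inj e_sunflower card_petal f_local room.
have cardW : #|{: VH + 'I_t * 'I_p.+1}| <= n by rewrite card_sum card_prod !card_ord.
apply: (slots_bounded e_EH e_inj e_sunflower card_petal f_local
  (iota := fun w => widen_ord cardW (enum_rank w))).
by move=> w1 w2 /(congr1 val) /= /val_inj /enum_rank_inj.
Qed.

Lemma slots_bound_arith n s t Q R : 0 < s -> 0 < Q -> R <= Q ->
  n - s < t.+1 * s -> t <= Q * R.+1 ^ 4 -> n <= 18 * s * Q ^ 5.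
Proof.
move=> s_gt0 Q_gt0 RQ n_lt t_le.
have R1Q : R.+1 <= 2 * Q by lia.
have {t_le} : t <= 16 * Q ^ 5.
  apply: (leq_trans t_le); rewrite (expnS Q 4) mulnCA leq_mul2l.
  by rewrite -[16]/(2 ^ 4) -expnMn leq_exp2r // R1Q orbT.
nia.
Qed.

Lemma C_loc_polynomial_lower_bound r (VH : finType) (EH : {set {set VH}}) :
  2 <= r -> r_graph r EH -> g r 4 <= #|EH| ->
  exists2 L, 0 < L & exists2 A, 0 < A & forall n, A <= n -> n <= A * C_loc r n EH ^ L.
Proof.
move=> r_ge2 rE gE.
have [d [dr [S [D [SE cS cD sfS]]]]] := has_some_sunflower_g (isT : 1 < 4) rE gE.
pose e i := enum_val (cast_ord (esym cS) i).
have e_S i : e i \in S by apply: enum_valP.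
have e_EH i : e i \in EH by apply: (subsetP SE).
have e_inj : injective e by move=> i j /enum_val_inj /cast_ord_inj.
have e_sunflower i j : i != j -> e i :&: e j = D.
  by move=> ij; apply: sfS => //; apply: contra_neq ij => /e_inj.
have card_petal i : #|e i :\: D| = (r - d).-1.+1.
  rewrite cardsD (setIidPr (kernel_sub e_sunflower i)) rE // cD prednK //; lia.
set s := #|VH|.
have p_le_s : (r - d).-1.+1 <= s by rewrite -(card_petal ord0) max_card.
have s_gt0 : 0 < s by apply: leq_trans p_le_s.
exists (5 * s); first by rewrite muln_gt0.
exists (18 * s); first by rewrite muln_gt0.
move=> n n_ge; have n_gt0 : 0 < n by apply: leq_trans n_ge; rewrite muln_gt0.
have [f f_local] := local_coloring_C_loc r n EH s_gt0.
set k := C_loc r n EH in f f_local *.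
have k_gt0 : 0 < k := leq_ltn_trans (leq0n _) (ltn_ord (f (Ordinal n_gt0) set0)).
rewrite [5 * s]mulnC expnM.
apply: (slots_bound_arith (t := (n - s) %/ s) (R := k ^ (r - d).-1.+1)) => //.
- by rewrite expn_gt0 k_gt0.
- exact: leq_pexp2l.
- exact: ltn_ceil.
apply: (sunflower_coloring_bound e_EH e_inj e_sunflower card_petal f_local).
have := leq_divM (n - s) s; have := leq_mul (leqnn ((n - s) %/ s)) p_le_s.
lia.
Qed.

From Stdlib Require Import Reals.

(* From here on [^] on nat denotes [Nat.pow]; mathcomp's power is [expn]. *)

Lemma INR_expn m L : INR (expn m L) = (INR m ^ L)%R.
Proof. by elim: L => [|L IHL]; rewrite ?expn0 // expnS mult_INR IHL. Qed.

Lemma Rpower_root_lower_bound (A L n k : nat) : 0 < A -> 0 < L -> 0 < n ->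
  n <= A * expn k L -> (/ Rpower (INR A) (/ INR L) * Rpower (INR n) (/ INR L) <= INR k)%R.
Proof.
move=> A_gt0 L_gt0 n_gt0 n_le.
have k_gt0 : 0 < k by rewrite lt0n; apply: contraTneq n_le => ->; rewrite exp0n // muln0 -ltnNge.
have INR_gt0 m : 0 < m -> (0 < INR m)%R by move=> /ltP; apply: lt_0_INR.
have L_pos := INR_gt0 _ L_gt0; have k_pos := INR_gt0 _ k_gt0.
have root_pos : (0 < Rpower (INR A) (/ INR L))%R by apply: exp_pos.
have kE : INR k = Rpower (INR k ^ L) (/ INR L).
  by rewrite -Rpower_pow // Rpower_mult Rinv_r ?Rpower_1 //; apply: Rgt_not_eq.
apply: (Rmult_le_reg_l _ _ _ root_pos).
rewrite -Rmult_assoc Rinv_r ?Rmult_1_l; last exact: Rgt_not_eq.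
rewrite kE Rpower_mult_distr; [|exact: INR_gt0|exact: pow_lt].
apply: Rle_Rpower_l; first exact/Rlt_le/Rinv_0_lt_compat.
split; first exact: INR_gt0.
by rewrite -INR_expn -mult_INR; apply/le_INR/leP.
Qed.

Theorem theorem5 (r : nat) (VH : finType) (EH : {set {set VH}}) :
  2 <= r -> r_graph r EH -> g r 4 <= #|EH| ->
  exists b : R, (0 < b)%R /\
    exists c : R, (0 < c)%R /\
      exists N : nat, forall n : nat, N <= n ->
        (c * Rpower (INR n) b <= INR (C_loc r n EH))%R.
Proof.
move=> r_ge2 rE gE.
have [L L_gt0 [A A_gt0 bound]] := C_loc_polynomial_lower_bound r_ge2 rE gE.
exists (/ INR L)%R; split; first by apply/Rinv_0_lt_compat/lt_0_INR/ltP.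
exists (/ Rpower (INR A) (/ INR L))%R; split; first exact/Rinv_0_lt_compat/exp_pos.
exists A => n n_ge; apply: Rpower_root_lower_bound => //; last exact: bound.
exact: leq_trans n_ge.
Qed.
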